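(* Let $n\ge 2$. If $\beta=(b_1,\dots,b_n)\in PF_{n,n-1}\setminus PF_{n,n-2}$, then $b_n=n$.
   Context: For $n\in\mathbb{N}$ let $[n]=\{1,\dots,n\}$ and $PP_n=[n]^n$. For an integer $k\ge 0$, the $k$-Naples parking rule: there are $n$ spots numbered $1,\dots,n$ west to east, initially empty; cars $c_1,\dots,c_n$ arrive in order, car $c_i$ preferring spot $b_i$. If spot $b_i$ is empty, $c_i$ parks there. Otherwise $c_i$ checks spots $b_i-1,\dots,b_i-k$ in this order (skipping those $<1$) and parks in the first empty one; if all are occupied, it drives east and parks in the first empty spot numbered greater than $b_i$, failing to park if none exists. $PF_{n,k}$ is the set of $\beta\in PP_n$ for which all cars park. *)

From mathcomp Require Import all_boot.
Set Implicit Arguments. Unset Strict Implicit. Unset Printing Implicit Defensive.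

(* Spots are numbered 1..n; occ is the list of occupied spots. *)

Definition naples_spot (n k : nat) (occ : seq nat) (b : nat) : option nat :=
  if b \notin occ then Some b
  else
    (* backward checks b-1, ..., b-k, skipping those < 1 *)
    let back := [seq b - j | j <- iota 1 k & (j < b) && (b - j \notin occ)] in
    match back with
    | s :: _ => Some s
    | [::] =>
      let fwd := [seq s <- iota b.+1 (n - b) | s \notin occ] in
      match fwd with
      | s :: _ => Some s
      | [::] => None
      end
    end.

Fixpoint naples_run (n k : nat) (occ : seq nat) (beta : seq nat) : option (seq nat) :=
  match beta with
  | [::] => Some occ
  | b :: beta' =>
    match naples_spot n k occ b with
    | Some s => naples_run n k (s :: occ) beta'
    | None => None
    end
  end.

Definition is_pref (n : nat) (beta : seq nat) : bool :=
  (size beta == n) && all (fun b => (1 <= b <= n)) beta.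

Definition in_PF (n k : nat) (beta : seq nat) : bool :=
  is_pref n beta && (naples_run n k [::] beta != None).

Example ex1 : in_PF 3 1 [:: 2; 2; 2] = true. Proof. by []. Qed.
Example ex2 : in_PF 3 0 [:: 2; 2; 2] = false. Proof. by []. Qed.
Example ex3 : in_PF 2 1 [:: 2; 2] = true. Proof. by []. Qed.
Example ex4 : in_PF 2 0 [:: 2; 2] = false. Proof. by []. Qed.
Example ex5 : in_PF 3 2 [:: 3; 3; 3] = true. Proof. by []. Qed.
Example ex6 : in_PF 3 1 [:: 3; 3; 3] = false. Proof. by []. Qed.

From mathcomp Require Import all_boot.
From mathcomp Require Import zify.

(* Raising the backward range of the Naples rule from k to k+1
   changes the spot of a car preferring b only when b and all of
   b-1, ..., b-k are occupied while b-(k+1) >= 1 is free; the car then takes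
   b-(k+1) under the (k+1)-rule ([naples_spot_extra_check]).  For n = k+2 and
   b <= n this forces b = n, the car parks in spot 1, and every spot 1..n is
   occupied afterwards ([extra_check_fills_lot]).  In a full lot every further
   car fails ([naples_spot_full]).  Hence, following the two runs side by
   side ([naples_run_divergence]), if the (n-1)-run succeeds while the
   (n-2)-run fails, the two runs first differ at the last car, whose
   preference is n.  Lemma 2.2 is the case of the empty initial lot. *)

Lemma filter_all_false (T : eqType) (p : pred T) (s : seq T) :
  {in s, forall x, ~~ p x} -> filter p s = [::].
Proof.
move=> Hs; rewrite -(filter_pred0 s); apply: eq_in_filter => x /Hs.
exact: negbTE.
Qed.

Lemma naples_spot_full n k occ c :
  1 <= c <= n -> {in [pred x | 1 <= x <= n], forall x, x \in occ} ->
  naples_spot n k occ c = None.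
Proof.
move=> Hc Hfull; rewrite /naples_spot (Hfull c Hc) /=.
have -> : [seq j <- iota 1 k | (j < c) && (c - j \notin occ)] = [::].
  apply: filter_all_false => j; rewrite mem_iota => Hj.
  rewrite negb_and negbK; case: (ltnP j c) => //= Hjc.
  by apply: Hfull; rewrite inE; lia.
rewrite /= filter_all_false // => x; rewrite mem_iota negbK => Hx.
by apply: Hfull; rewrite inE; lia.
Qed.

Lemma naples_spot_extra_check n k occ b :
  naples_spot n k.+1 occ b = naples_spot n k occ b \/
  [/\ k.+1 < b, b \in occ, {in iota 1 k, forall j, b - j \in occ}
    & naples_spot n k.+1 occ b = Some (b - k.+1)].
Proof.
have Eiota : iota 1 k.+1 = iota 1 k ++ [:: k.+1].
  by rewrite -[k.+1]addn1 iotaD /= add1n addn1.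
rewrite /naples_spot Eiota filter_cat map_cat.
case Hb: (b \in occ) => /=; last by left.
case Eback: (filter _ (iota 1 k)) => [|s t] /=; last by left.
case Hextra: ((k.+1 < b) && (b - k.+1 \notin occ)) => /=; last by left.
move/andP: Hextra => [Hkb _]; right; split => // j Hj.
have : j \notin [seq j <- iota 1 k | (j < b) && (b - j \notin occ)]
  by rewrite Eback.
rewrite mem_filter Hj andbT negb_and negbK.
by case/orP => // Hjb; move: Hj; rewrite mem_iota; lia.
Qed.

Lemma extra_check_fills_lot k occ b :
  b <= k.+2 -> k.+1 < b -> b \in occ -> {in iota 1 k, forall j, b - j \in occ} ->
  b = k.+2 /\ b - k.+1 = 1 /\
  {in [pred x | 1 <= x <= k.+2], forall x, x \in 1 :: occ}.
Proof.
move=> Hbn Hkb Hb Hback; have Eb : b = k.+2 by lia.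
subst b; split=> //; split; first lia.
move=> x; rewrite inE in_cons => Hx.
case: (eqVneq x 1) => //= Hx1; case: (eqVneq x k.+2) => [-> //|Hxn].
have -> : x = k.+2 - (k.+2 - x) by lia.
by apply: Hback; rewrite mem_iota; lia.
Qed.

Lemma naples_run_divergence k occ beta :
  all (fun b => 1 <= b <= k.+2) beta ->
  naples_run k.+2 k.+1 occ beta != None ->
  naples_run k.+2 k occ beta = None ->
  last 0 beta = k.+2.
Proof.
elim: beta occ => [|b beta IH] occ //= /andP[Hb Hall].
case: (naples_spot_extra_check k.+2 k occ b) => [<-|[Hkb Hbo Hback ->]].
  case: (naples_spot _ _ occ b) => [s|] //= Hsucc Hfail.
  by have := IH _ Hall Hsucc Hfail; case: (beta).
have [Eb [E1 Hfull]] :=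
  @extra_check_fills_lot k occ b (andP Hb).2 Hkb Hbo Hback.
rewrite E1; case: beta Hall {IH} => [|c beta] /=; first by rewrite Eb.
by case/andP=> Hc _; rewrite naples_spot_full.
Qed.

Theorem lemma2p2 (n : nat) (beta : seq nat) :
  2 <= n ->
  in_PF n (n - 1) beta -> ~~ in_PF n (n - 2) beta ->
  last 0 beta = n.
Proof.
case: n => [|[|k]] // _; rewrite !subSS !subn0.
rewrite /in_PF => /andP[Hpref Hsucc].
rewrite Hpref /= negbK => /eqP Hfail; move: Hpref => /andP[_ Hall].
exact: naples_run_divergence Hall Hsucc Hfail.
Qed.
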